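(* $S\mathbb{H}$ is diffeomorphic to $S^3\times S^3\times\mathbb{R}$. In particular, $S\mathbb{H}$ is orientable.
   Context: For $q=a+bi+cj+dk\in\mathbb{H}$, $\bar q=a-bi-cj-dk$. $\mathcal{V}=\mathrm{span}_\mathbb{R}\{1,i,j\}$. $S\mathbb{H}=\{(\xi,\eta)\in\mathbb{H}^2\setminus\{(0,0)\}:\xi\bar\eta\in\mathcal{V}\}$, a subset of $\mathbb{H}^2\cong\mathbb{R}^8$. *)

From HB Require Import structures.
From mathcomp Require Import all_boot all_order all_algebra.
From mathcomp Require Import all_classical all_reals all_analysis.
Set Implicit Arguments. Unset Strict Implicit. Unset Printing Implicit Defensive.
Import Order.TTheory GRing.Theory Num.Theory.
Import numFieldNormedType.Exports.
Local Open Scope classical_set_scope.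
Local Open Scope ring_scope.

Fixpoint iterD {R : realType} {V W : normedModType R} (vs : seq V) (f : V -> W)
  : V -> W :=
  match vs with
  | [::] => f
  | v :: vs' => fun x => 'D_v (iterD vs' f) x
  end.

Definition smooth_on {R : realType} {V W : normedModType R} (U : set V)
  (f : V -> W) : Prop :=
  forall vs : seq V,
    (forall (v x : V), U x -> derivable (iterD vs f) x v) /\
    (forall x : V, U x -> {for x, continuous (iterD vs f)}).

(* Milnor's notion: f : A -> B (A a subset of V) is smooth if it locally extends
   to a smooth map on an open neighbourhood in the ambient space *)
Definition smooth_map_on {R : realType} {V W : normedModType R} (A : set V)
  (f : V -> W) : Prop :=
  forall a, A a -> exists U : set V, open U /\ U a /\
     exists h : V -> W, smooth_on U h /\ (forall x, U x -> A x -> h x = f x).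

Definition diffeomorphic {R : realType} {V W : normedModType R}
  (A : set V) (B : set W) : Prop :=
  exists (f : V -> W) (g : W -> V),
    (forall a, A a -> B (f a)) /\ (forall b, B b -> A (g b)) /\
    (forall a, A a -> g (f a) = a) /\ (forall b, B b -> f (g b) = b) /\
    smooth_map_on A f /\ smooth_map_on B g.

Record quat (R : Type) := Quat { qa : R; qb : R; qc : R; qd : R }.

(* q = qa + qb i + qc j + qd k *)
Definition qmul {R : ringType} (p q : quat R) : quat R :=
  Quat (qa p * qa q - qb p * qb q - qc p * qc q - qd p * qd q)
       (qa p * qb q + qb p * qa q + qc p * qd q - qd p * qc q)
       (qa p * qc q - qb p * qd q + qc p * qa q + qd p * qb q)
       (qa p * qd q + qb p * qc q - qc p * qb q + qd p * qa q).

Definition qconj {R : ringType} (q : quat R) : quat R :=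
  Quat (qa q) (- qb q) (- qc q) (- qd q).

Definition inV {R : ringType} (q : quat R) : Prop := qd q = 0.

Definition quat_of_row {R : ringType} (x : 'rV[R]_4) : quat R :=
  Quat (x 0 (inord 0)) (x 0 (inord 1)) (x 0 (inord 2)) (x 0 (inord 3)).

(* S H inside H^2 = R^(4+4) = R^8 ; a point z = (xi, eta) *)
Definition SH (R : realType) : set 'rV[R]_(4 + 4) :=
  [set z | z != 0 /\
     inV (qmul (quat_of_row (lsubmx z)) (qconj (quat_of_row (rsubmx z))))].

Definition S3 {R : realType} (x : 'rV[R]_4) : Prop :=
  \sum_(i < 4) x 0 i ^+ 2 = 1.

Definition S3xS3xR (R : realType) : set 'rV[R]_(4 + 4 + 1) :=
  [set w | S3 (lsubmx (lsubmx w)) /\ S3 (rsubmx (lsubmx w))].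

(* Write a point (xi, eta) of H^2 as (c_0, ..., c_7).  The k-component of xi * conj eta is the
   split quadratic form c3 c4 - c0 c7 + c2 c5 - c1 c6 = (|u|^2 - |v|^2) / 4, where
   u = (c3 + c4, c0 - c7, c2 + c5, c1 - c6) and v = (c3 - c4, c0 + c7, c2 - c5, c1 + c6) are
   linear coordinates on R^8.  Hence SH is the punctured null cone |u| = |v| > 0, which
   (u, v) |-> (u / |u|, v / |v|, ln |u|) maps onto S^3 x S^3 x R, with inverse
   (p, q, t) |-> e^t (p, q).  Every component of both maps is built from coordinates by sums,
   products, exp and ln of positive functions; this class is closed under directional
   derivatives, so all its members are smooth. *)

From Pilot Require Import Defs.
From mathcomp Require Import all_boot all_order all_algebra.
From mathcomp Require Import all_classical all_reals all_analysis.
From mathcomp Require Import ring lra.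
Set Implicit Arguments. Unset Strict Implicit. Unset Printing Implicit Defensive.
Import Order.TTheory GRing.Theory Num.Theory.
Import numFieldNormedType.Exports.
Local Open Scope classical_set_scope.
Local Open Scope ring_scope.

Lemma smooth_map_on_open (R : realType) (V W : normedModType R) (U A : set V)
    (f : V -> W) :
  open U -> A `<=` U -> smooth_on U f -> smooth_map_on A f.
Proof. by move=> oU AU sf a Aa; exists U; split=> //; split; [exact: AU|exists f]. Qed.

Section ElementaryFunctions.
Variables (R : realType) (n : nat).
Local Notation V := 'rV[R]_n.

Lemma derive_along_line (f : V -> R) x v :
  'D_v f x = derive1 (fun h : R => f (h *: v + x)) 0.
Proof.
rewrite derive1E /derive; set lhs := fun h => h^-1 *: _; set rhs := fun h => h^-1 *: _.
suff -> : lhs = rhs by [].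
by apply/funext => h; rewrite /lhs /rhs /= addr0 scale0r add0r [_%:A]mulr1.
Qed.

Lemma is_derive_comp_real (phi : R -> R) (f : V -> R) x v (dphi df : R) :
  is_derive x v f df -> is_derive (f x) 1 phi dphi ->
  is_derive x v (phi \o f) (dphi * df).
Proof.
move=> [fx <-] [phix <-].
have line0 : (fun h : R => f (h *: v + x)) 0 = f x by rewrite scale0r add0r.
have fline := (derivable1P f x v).1 fx.
have philine : derivable phi ((fun h : R => f (h *: v + x)) 0) 1 by rewrite line0.
apply: DeriveDef.
  apply/derivable1P/derivable1_diffP.
  apply: (differentiable_comp (f := fun h : R => f (h *: v + x)) (g := phi)).
    exact/derivable1_diffP.
  exact/derivable1_diffP.
rewrite derive_along_line (derive_along_line f).
by rewrite (derive1_comp fline philine) line0 derive1E.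
Qed.

Lemma near_eq_continuous (f g : V -> R) x :
  {near x, f =1 g} -> {for x, continuous f} -> {for x, continuous g}.
Proof.
move=> fg; rewrite /prop_for /continuous_at (nbhs_singleton fg) => cf.
by apply: cvg_trans cf; exact: near_eq_cvg fg.
Qed.

Lemma continuous_mx m k (M : V -> 'M[R]_(m, k)) x :
  (forall i j, {for x, continuous (fun y => M y i j)}) -> {for x, continuous M}.
Proof.
move=> Mc; apply/(@cvgrPdist_le _ _ _ (nbhs x) (nbhs_filter x)) => /= e e0.
near=> y.
rewrite [leLHS]/Num.Def.normr/= mx_normrE (bigmax_le _ (ltW e0))//= => ij _.
rewrite !mxE/=; move: ij; near: y; apply: filter_forall => ij.
exact: (cvgrPdist_le _ _).1 (Mc ij.1 ij.2) e e0.
Unshelve. all: by end_near. Qed.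

Inductive elementary (U : set V) : (V -> R) -> Prop :=
| elementary_cst c : elementary U (fun=> c)
| elementary_coord i : elementary U (fun x => x 0 i)
| elementary_add f g :
    elementary U f -> elementary U g -> elementary U (fun x => f x + g x)
| elementary_mul f g :
    elementary U f -> elementary U g -> elementary U (fun x => f x * g x)
| elementary_exp f : elementary U f -> elementary U (fun x => expR (f x))
| elementary_ln f : elementary U f -> (forall x, U x -> 0 < f x) ->
    elementary U (fun x => ln (f x))
| elementary_eq f g : elementary U f -> (forall x, U x -> f x = g x) ->
    elementary U g.

Variables (U : set V) (oU : open U).

Lemma near_open_eq (f g : V -> R) x :
  (forall y, U y -> f y = g y) -> U x -> {near x, f =1 g}.
Proof. by move=> fg Ux; apply: filterS fg _; apply: open_nbhs_nbhs. Qed.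

Lemma elementary_regular f : elementary U f ->
  forall x, U x -> {for x, continuous f} /\ forall v, derivable f x v.
Proof.
elim=> {f} [c|i|f g _ Pf _ Pg|f g _ Pf _ Pg|f _ Pf|f _ Pf fpos|f g _ Pf fg] x Ux.
- by split=> [|v]; [exact: cst_continuous|exact: derivable_cst].
- split=> [|v]; first exact: coord_continuous.
  exact/diff_derivable/differentiable_coord.
- have [[cf df] [cg dg]] := (Pf x Ux, Pg x Ux).
  by split=> [|v]; [exact: continuousD|exact: derivableD].
- have [[cf df] [cg dg]] := (Pf x Ux, Pg x Ux).
  by split=> [|v]; [exact: continuousM|exact: derivableM].
- have [cf df] := Pf x Ux; split=> [|v].
    by apply: (@continuous_comp _ _ _ f expR); [exact: cf|exact: continuous_expR].
  by have [] := is_derive_comp_real (derivableP (df v)) (is_derive_expR (f x)).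
- have [cf df] := Pf x Ux; split=> [|v].
    by apply: (@continuous_comp _ _ _ f (@ln R)); [exact: cf|exact: continuous_ln (fpos x Ux)].
  by have [] := is_derive_comp_real (derivableP (df v)) (is_derive1_ln (fpos x Ux)).
- have [cf df] := Pf x Ux; have fgx := near_open_eq fg Ux.
  by split=> [|v]; [exact: near_eq_continuous cf|exact: near_eq_derivable (df v)].
Qed.

Lemma elementary_opp f : elementary U f -> elementary U (fun x => - f x).
Proof.
move=> Ef; apply: (elementary_eq (elementary_mul (elementary_cst _ (-1)) Ef)).
by move=> x _; rewrite mulN1r.
Qed.

Lemma elementary_exprn f k : elementary U f -> elementary U (fun x => f x ^+ k).
Proof.
move=> Ef; elim: k => [|k Ek]; first exact: (elementary_eq (elementary_cst _ 1)).
by apply: (elementary_eq (elementary_mul Ef Ek)) => x _; rewrite exprS.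
Qed.

Lemma elementary_inv f : elementary U f -> (forall x, U x -> 0 < f x) ->
  elementary U (fun x => (f x)^-1).
Proof.
move=> Ef fpos; apply: (elementary_eq (elementary_exp (elementary_opp (elementary_ln Ef fpos)))).
by move=> x Ux; rewrite expRN lnK ?posrE ?fpos.
Qed.

Lemma elementary_sqrt f : elementary U f -> (forall x, U x -> 0 < f x) ->
  elementary U (fun x => Num.sqrt (f x)).
Proof.
move=> Ef fpos.
apply: (elementary_eq (elementary_exp (elementary_mul (elementary_cst _ 2^-1) (elementary_ln Ef fpos)))).
by move=> x Ux; rewrite -powR12_sqrt ?ltW ?fpos // /powR gt_eqF ?fpos.
Qed.

Lemma elementary_derive f : elementary U f -> forall v, elementary U ('D_v f).
Proof.
move=> Ef v.
elim: Ef => {f} [c|i|f g Ef Df Eg Dg|f g Ef Df Eg Dg|f Ef Df|f Ef Df fpos|f g Ef Df fg].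
- by apply: (elementary_eq (elementary_cst _ 0)) => x _; rewrite derive_cst.
- apply: (elementary_eq (elementary_cst _ (v 0 i))) => x _.
  have := congr1 (fun M : V => M 0 i) (derive_mx (@derivable_id _ _ x v)).
  by rewrite /= derive_id mxE.
- apply: (elementary_eq (elementary_add Df Dg)).
  move=> x Ux; have [[_ df] [_ dg]] := (elementary_regular Ef Ux, elementary_regular Eg Ux).
  by rewrite deriveD.
- apply: (elementary_eq (elementary_add (elementary_mul Ef Dg) (elementary_mul Eg Df))).
  move=> x Ux; have [[_ df] [_ dg]] := (elementary_regular Ef Ux, elementary_regular Eg Ux).
  by rewrite deriveM.
- apply: (elementary_eq (elementary_mul (elementary_exp Ef) Df)) => x Ux.
  have [_ df] := elementary_regular Ef Ux.
  by have [_ ->] := is_derive_comp_real (derivableP (df v)) (is_derive_expR (f x)).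
- apply: (elementary_eq (elementary_mul (elementary_inv Ef fpos) Df)) => x Ux.
  have [_ df] := elementary_regular Ef Ux.
  by have [_ ->] := is_derive_comp_real (derivableP (df v)) (is_derive1_ln (fpos x Ux)).
- apply: (elementary_eq Df) => x Ux.
  exact: near_eq_derive (near_open_eq fg Ux).
Qed.

Definition elementary_row m (F : V -> 'rV[R]_m) :=
  forall j, elementary U (fun x => F x 0 j).

Lemma elementary_row_regular m (F : V -> 'rV[R]_m) : elementary_row F ->
  forall x, U x -> {for x, continuous F} /\ forall v, derivable F x v.
Proof.
move=> EF x Ux; have reg j := elementary_regular (EF j) Ux.
split=> [|v].
  by apply: continuous_mx => i j; rewrite (ord1 i); case: (reg j).
by apply/derivable_mxP => i j; rewrite (ord1 i); case: (reg j).
Qed.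

Lemma elementary_row_derive m (F : V -> 'rV[R]_m) : elementary_row F ->
  forall v, elementary_row ('D_v F).
Proof.
move=> EF v j; apply: (elementary_eq (elementary_derive (EF j) v)) => x Ux.
have [_ dF] := elementary_row_regular EF Ux.
by rewrite (derive_mx (dF v)) mxE.
Qed.

Lemma elementary_row_smooth m (F : V -> 'rV[R]_m) : elementary_row F -> smooth_on U F.
Proof.
move=> EF vs; have /elementary_row_regular reg : elementary_row (Defs.iterD vs F).
  by elim: vs => [|v vs IH] //=; apply: elementary_row_derive.
by split=> [v x Ux|x Ux]; have [] := reg x Ux.
Qed.

End ElementaryFunctions.

Section Cone.
Variable R : realType.

(* Out-of-range indices wrap to 0 through [inord], hence the bounds in the lemmas below. *)
Definition entry n (z : 'rV[R]_n.+1) (k : nat) : R := z 0 (inord k).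

Lemma entry_row n (F : nat -> R) k : (k < n.+1)%N -> entry (\row_(j < n.+1) F j) k = F k.
Proof. by move=> kn; rewrite /entry mxE inordK. Qed.

Lemma entry_lsubmx m n (z : 'rV[R]_(m.+1 + n.+1)) k :
  (k < m.+1)%N -> entry (lsubmx z) k = entry z k.
Proof.
move=> km; rewrite /entry mxE; congr (z 0 _); apply: val_inj.
by rewrite /= !inordK // (leq_trans km) // leq_addr.
Qed.

Lemma entry_rsubmx m n (z : 'rV[R]_(m.+1 + n.+1)) k :
  (k < n.+1)%N -> entry (rsubmx z) k = entry z (m.+1 + k).
Proof.
by move=> kn; rewrite /entry mxE; congr (z 0 _); apply: val_inj; rewrite /= !inordK // ltn_add2l.
Qed.

Lemma sum_sqr_entry n (z : 'rV[R]_n.+1) :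
  \sum_i z 0 i ^+ 2 = \sum_(i < n.+1) entry z i ^+ 2.
Proof. by apply: eq_bigr => i _; rewrite /entry inord_val. Qed.

Lemma sum_sqr_row_gt0 n (z : 'rV[R]_n) : z != 0 -> 0 < \sum_i z 0 i ^+ 2.
Proof.
move=> z0; rewrite lt_def sumr_ge0 ?andbT => [|i _]; last exact: sqr_ge0.
apply: contra z0 => /eqP/psumr_eq0P z2; apply/eqP/rowP => i.
by rewrite mxE; apply/eqP; rewrite -sqrf_eq0 z2 // => j _; exact: sqr_ge0.
Qed.

Definition norm2 (a : nat -> R) : R := a 0%N ^+ 2 + a 1%N ^+ 2 + a 2%N ^+ 2 + a 3%N ^+ 2.

Definition k_part (c : nat -> R) : R :=
  c 3%N * c 4%N - c 0%N * c 7%N + c 2%N * c 5%N - c 1%N * c 6%N.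

Definition u_of (c : nat -> R) (k : nat) : R :=
  match k with 0 => c 3%N + c 4%N | 1 => c 0%N - c 7%N | 2 => c 2%N + c 5%N | _ => c 1%N - c 6%N end.

Definition v_of (c : nat -> R) (k : nat) : R :=
  match k with 0 => c 3%N - c 4%N | 1 => c 0%N + c 7%N | 2 => c 2%N - c 5%N | _ => c 1%N + c 6%N end.

Definition uv_inv (a b : nat -> R) (j : nat) : R :=
  match j with
  | 0 => (a 1%N + b 1%N) / 2 | 1 => (a 3%N + b 3%N) / 2
  | 2 => (a 2%N + b 2%N) / 2 | 3 => (a 0%N + b 0%N) / 2
  | 4 => (a 0%N - b 0%N) / 2 | 5 => (a 2%N - b 2%N) / 2
  | 6 => (b 3%N - a 3%N) / 2 | _ => (b 1%N - a 1%N) / 2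
  end.

Lemma k_part_uv c : 4 * k_part c = norm2 (u_of c) - norm2 (v_of c).
Proof. by rewrite /k_part /norm2 /=; ring. Qed.

Lemma norm2_uv c :
  norm2 (u_of c) + norm2 (v_of c) = 2 * (norm2 c + norm2 (fun k => c (4 + k)%N)).
Proof. by rewrite /norm2 /=; ring. Qed.

Lemma quat_of_rowE (x : 'rV[R]_4) :
  quat_of_row x = Quat (entry x 0) (entry x 1) (entry x 2) (entry x 3).
Proof. by []. Qed.

Lemma qd_mul_conj (z : 'rV[R]_(4 + 4)) :
  qd (qmul (quat_of_row (lsubmx z)) (qconj (quat_of_row (rsubmx z)))) = k_part (entry z).
Proof. by rewrite !quat_of_rowE /= !entry_lsubmx // !entry_rsubmx // addnE /k_part /=; ring. Qed.

Lemma SHE z : SH z <-> z != 0 /\ k_part (entry z) = 0.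
Proof. by rewrite /SH /inV /mkset qd_mul_conj. Qed.

Lemma S3E (x : 'rV[R]_4) : S3 x <-> norm2 (entry x) = 1.
Proof. by rewrite /S3 sum_sqr_entry !big_ord_recr big_ord0 /= add0r. Qed.

Lemma S3xS3xRE w : S3xS3xR w <->
  norm2 (entry w) = 1 /\ norm2 (fun k => entry w (4 + k)%N) = 1.
Proof. by rewrite /S3xS3xR /= !S3E /norm2 !entry_lsubmx // !entry_rsubmx // !entry_lsubmx. Qed.

Lemma eq_norm2 a b : (forall k, (k < 4)%N -> a k = b k) -> norm2 a = norm2 b.
Proof. by move=> ab; rewrite /norm2 !ab. Qed.

Lemma eq_uv_inv a a' b b' j : (forall k, (k < 4)%N -> a k = a' k) ->
  (forall k, (k < 4)%N -> b k = b' k) -> uv_inv a b j = uv_inv a' b' j.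
Proof. by move=> aa' bb'; case: j => [|[|[|[|[|[|[|j]]]]]]]; rewrite /uv_inv !aa' ?bb'. Qed.

Lemma uv_invZ a b s j :
  uv_inv (fun k => a k * s) (fun k => b k * s) j = uv_inv a b j * s.
Proof. by case: j => [|[|[|[|[|[|[|j]]]]]]]; rewrite /uv_inv; ring. Qed.

Lemma uv_invK c j : (j < 8)%N -> uv_inv (u_of c) (v_of c) j = c j.
Proof. by case: j => [|[|[|[|[|[|[|[|j]]]]]]]] // _; rewrite /uv_inv /=; field. Qed.

Lemma norm2_scale a s : norm2 (fun k => a k * s) = norm2 a * s ^+ 2.
Proof. by rewrite /norm2; ring. Qed.

Definition polar_entry (c : nat -> R) (j : nat) : R :=
  if (j < 4)%N then u_of c j / Num.sqrt (norm2 (u_of c))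
  else if (j < 8)%N then v_of c (j - 4) / Num.sqrt (norm2 (v_of c))
  else ln (Num.sqrt (norm2 (u_of c))).

Definition polar_inv_entry (c : nat -> R) (j : nat) : R :=
  uv_inv c (fun k => c (4 + k)%N) j * expR (c 8%N).

Definition polar (z : 'rV[R]_(4 + 4)) : 'rV[R]_(4 + 4 + 1) :=
  \row_j polar_entry (entry z) j.

Definition polar_inv (w : 'rV[R]_(4 + 4 + 1)) : 'rV[R]_(4 + 4) :=
  \row_j polar_inv_entry (entry w) j.

Section PolarEntries.
Variable z : 'rV[R]_(4 + 4).
Let c := entry z.

Lemma entry_polar_u k : (k < 4)%N ->
  entry (polar z) k = u_of c k / Num.sqrt (norm2 (u_of c)).
Proof. by move=> k4; rewrite entry_row ?(ltn_trans k4) // /polar_entry k4. Qed.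

Lemma entry_polar_v k : (k < 4)%N ->
  entry (polar z) (4 + k) = v_of c k / Num.sqrt (norm2 (v_of c)).
Proof.
move=> k4; rewrite entry_row ?ltn_add2l ?(ltn_trans k4) // /polar_entry.
by rewrite ltnNge leq_addr ltn_add2l k4 addKn.
Qed.

Lemma entry_polar_t : entry (polar z) 8 = ln (Num.sqrt (norm2 (u_of c))).
Proof. by rewrite entry_row. Qed.

End PolarEntries.

Lemma uv_polar_inv w k : (k < 4)%N ->
  u_of (entry (polar_inv w)) k = entry w k * expR (entry w 8) /\
  v_of (entry (polar_inv w)) k = entry w (4 + k) * expR (entry w 8).
Proof.
case: k => [|[|[|[|k]]]] // _; rewrite /u_of /v_of /= !entry_row // /polar_inv_entry /uv_inv addnE /=.
all: by split; field.
Qed.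

Lemma row_entryP n (x y : 'rV[R]_n.+1) :
  (forall k, (k < n.+1)%N -> entry x k = entry y k) -> x = y.
Proof. by move=> xy; apply/rowP => i; rewrite -[i]inord_val; apply: xy. Qed.

Lemma SH_norm2 z : SH z ->
  0 < norm2 (u_of (entry z)) /\ norm2 (v_of (entry z)) = norm2 (u_of (entry z)).
Proof.
move=> /SHE [z0 kz].
have uv : norm2 (u_of (entry z)) = norm2 (v_of (entry z)).
  by apply/eqP; rewrite -subr_eq0 -k_part_uv kz mulr0.
have sum_pos := sum_sqr_row_gt0 z0.
rewrite sum_sqr_entry !big_ord_recr big_ord0 /= add0r in sum_pos.
have := norm2_uv (entry z); rewrite /norm2 addnE /= in uv *.
by split; lra.
Qed.

Lemma polar_S3xS3xR z : SH z -> S3xS3xR (polar z).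
Proof.
move=> /SH_norm2 [u0 vu]; have v0 : 0 < norm2 (v_of (entry z)) by rewrite vu.
apply/S3xS3xRE; split.
  rewrite (eq_norm2 (entry_polar_u z)) norm2_scale exprVn sqr_sqrtr ?ltW //.
  by rewrite mulfV ?gt_eqF.
rewrite (eq_norm2 (entry_polar_v z)) norm2_scale exprVn sqr_sqrtr ?ltW //.
by rewrite mulfV ?gt_eqF.
Qed.

Lemma norm2_polar_inv w : S3xS3xR w ->
  norm2 (u_of (entry (polar_inv w))) = expR (entry w 8) ^+ 2 /\
  norm2 (v_of (entry (polar_inv w))) = expR (entry w 8) ^+ 2.
Proof.
move=> /S3xS3xRE [p1 q1].
rewrite (eq_norm2 (fun k k4 => (uv_polar_inv w k4).1)).
rewrite (eq_norm2 (fun k k4 => (uv_polar_inv w k4).2)).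
by rewrite !norm2_scale p1 q1 !mul1r.
Qed.

Lemma polar_inv_SH w : S3xS3xR w -> SH (polar_inv w).
Proof.
move=> /norm2_polar_inv [Nu Nv]; have e0 := expR_gt0 (entry w 8).
apply/SHE; split; last by have := k_part_uv (entry (polar_inv w)); rewrite Nu Nv; lra.
by apply/eqP => w0; move: Nu; rewrite w0 /norm2 /u_of /entry !mxE /=; nra.
Qed.

Lemma polarK z : SH z -> polar_inv (polar z) = z.
Proof.
move=> /SH_norm2 [u0 vu]; have s0 : Num.sqrt (norm2 (u_of (entry z))) != 0.
  by rewrite gt_eqF // sqrtr_gt0.
apply: row_entryP => j j8.
rewrite entry_row // /polar_inv_entry entry_polar_t lnK ?posrE ?sqrtr_gt0 //.
rewrite (eq_uv_inv j (entry_polar_u z) (entry_polar_v z)) vu.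
by rewrite uv_invZ uv_invK // divfK.
Qed.

Lemma polar_invK w : S3xS3xR w -> polar (polar_inv w) = w.
Proof.
move=> /norm2_polar_inv [Nu Nv]; have e0 := expR_gt0 (entry w 8).
have se : Num.sqrt (expR (entry w 8) ^+ 2) = expR (entry w 8).
  by rewrite sqrtr_sqr ger0_norm // ltW.
apply: row_entryP => j j9; have [j4|j4] := ltnP j 4.
  by rewrite entry_polar_u // Nu se (uv_polar_inv w j4).1 mulfK // gt_eqF.
have [j8|j8] := ltnP j 8.
  have k4 : (j - 4 < 4)%N by rewrite ltn_subLR.
  by rewrite -(subnKC j4) entry_polar_v // Nv se (uv_polar_inv w k4).2 mulfK // gt_eqF.
have -> : j = 8%N by apply/eqP; rewrite eqn_leq -ltnS j9 j8.
by rewrite entry_polar_t Nu se expRK.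
Qed.

Definition uv_pos : set 'rV[R]_(4 + 4) :=
  [set z | 0 < norm2 (u_of (entry z)) /\ 0 < norm2 (v_of (entry z))].

Lemma SH_uv_pos : @SH R `<=` uv_pos.
Proof. by move=> z /SH_norm2 [u0 vu]; rewrite /uv_pos /mkset vu. Qed.

Lemma elementary_entry n (U : set 'rV[R]_n.+1) k : elementary U (fun z => entry z k).
Proof. exact: elementary_coord. Qed.

Ltac solve_elementary :=
  repeat first [ apply: elementary_cst | apply: elementary_entry | apply: elementary_add
    | apply: elementary_opp | apply: elementary_mul | apply: elementary_exprn
    | apply: elementary_exp | apply: elementary_inv | apply: elementary_sqrt
    | apply: elementary_ln ].

Lemma open_uv_pos : open uv_pos.
Proof.
have cont f x : elementary setT f -> {for x, continuous f}.
  by move=> Ef; have [] := elementary_regular openT Ef (I : setT x).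
rewrite (_ : uv_pos = (fun z => norm2 (u_of (entry z))) @^-1` [set x | 0 < x] `&`
                      (fun z => norm2 (v_of (entry z))) @^-1` [set x | 0 < x]) //.
apply: openI; apply: open_comp => [z _|]; try exact: open_gt.
all: by apply: cont; rewrite /norm2 /u_of /v_of /=; solve_elementary.
Qed.

Lemma elementary_polar : elementary_row uv_pos polar.
Proof.
move=> j; apply: (elementary_eq (f := fun z => polar_entry (entry z) j)) => [|z _]; last by rewrite mxE.
case: j => -[|[|[|[|[|[|[|[|[|j]]]]]]]]] hj //; rewrite /polar_entry /= /norm2 /=; solve_elementary.
all: by move=> z [u0 v0]; rewrite ?sqrtr_gt0.
Qed.

Lemma elementary_polar_inv : elementary_row setT polar_inv.
Proof.
move=> j; apply: (elementary_eq (f := fun w => polar_inv_entry (entry w) j)) => [|w _]; last by rewrite mxE.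
case: j => -[|[|[|[|[|[|[|[|j]]]]]]]] hj //; rewrite /polar_inv_entry /uv_inv /=; solve_elementary.
Qed.

End Cone.

Theorem lemma3p9 (R : realType) : diffeomorphic (@SH R) (@S3xS3xR R).
Proof.
exists (@polar R), (@polar_inv R).
split; first exact: polar_S3xS3xR.
split; first exact: polar_inv_SH.
split; first exact: polarK.
split; first exact: polar_invK.
split.
  apply: smooth_map_on_open (@open_uv_pos R) (@SH_uv_pos R) _.
  exact (elementary_row_smooth (@open_uv_pos R) (@elementary_polar R)).
apply: smooth_map_on_open openT (subsetT _) _.
exact (elementary_row_smooth openT (@elementary_polar_inv R)).
Qed.
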